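(* Let $L\ge1$, $k\ge1$ be integers with $k\mid L$, let $N$ be an $L$-bit integer, $a<N$ a positive integer with $\gcd(a,N)=1$, $r$ the order of $a$ modulo $N$, $\epsilon>0$, and let $p=\lceil\log_2(2+\frac{k}{2\epsilon})\rceil$, $l_k=(k-1)\frac Lk+1$, $t_k=2L+2-l_k+p$. Let $s_0\in\{0,1,\dots,r-1\}$ be such that $2^{l_k+1}\cdot\frac{s_0}{r}$ is not an integer, and let $m_k$ be a $t_k$-bit string with $$d_{t_k}\Big(m_k,\big(\tfrac{s_0}{r}\big)_{\{l_k,2L+1+p\}}\Big)<2^p.$$ Then $(m_k)_{[1,2]}=\big(\frac{s_0}{r}\big)_{\{l_k,l_k+1\}}$ and $\big|m_k-\big(\frac{s_0}{r}\big)_{\{l_k,2L+1+p\}}\big|<2^p$.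
   Context: Bit strings are identified with the binary integers they represent (most significant bit first). For a bit string $x=x_1\cdots x_n$, $x_{[i,j]}=x_i\cdots x_j$. For real $\omega$ with binary fractional expansion $0.b_1b_2\cdots$ (not ending in infinitely many 1's), $\omega_{\{i,j\}}=b_i\cdots b_j$. For two $t$-bit strings $x,y$, $d_t(x,y)=\min(|x-y|,2^t-|x-y|)$. *)

From HB Require Import structures.
From mathcomp Require Import all_boot all_order all_algebra.
From mathcomp Require Import all_classical all_reals all_analysis.
Set Implicit Arguments. Unset Strict Implicit. Unset Printing Implicit Defensive.
Import Order.TTheory GRing.Theory Num.Theory.

(* omega_{i,j} for omega = s/r with 0 <= s < r: the integer whose binary digits
   are the bits b_i ... b_j of the (standard, non-terminating-in-1s) binary
   expansion 0.b_1 b_2 ... of s/r, i.e. floor(2^j * s/r) mod 2^(j-i+1). *)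
Definition frac_bits (s r i j : nat) : nat :=
  (s * 2 ^ j %/ r) %% 2 ^ (j.+1 - i).

Definition top2 (t x : nat) : nat := x %/ 2 ^ (t - 2).

Definition dist_t (t x y : nat) : int :=
  (Num.min `|x%:Z - y%:Z| ((2 ^ t)%:Z - `|x%:Z - y%:Z|))%R.

Definition is_order (a N r : nat) : Prop :=
  (0 < r)%N /\ a ^ r = 1 %[mod N] /\
  (forall r', (0 < r')%N -> a ^ r' = 1 %[mod N] -> (r <= r')%N).

From HB Require Import structures.
From mathcomp Require Import all_boot all_order all_algebra.
From mathcomp Require Import all_classical all_reals all_analysis.
From mathcomp Require Import cyclic zify.
Import Order.TTheory GRing.Theory Num.Theory.

Set Implicit Arguments.
Unset Strict Implicit.
Unset Printing Implicit Defensive.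

(* Since r <= N < 2^L and l_k <= L, the window length e = t_k - 2 satisfies
   2^p r < 2^e.  Write s0 2^(l_k+1) = q r + c; the non-integrality hypothesis
   gives 0 < c < r.  The bits l_k .. 2L+1+p of s0/r are then the two bits
   q mod 4 followed by the e-bit number z = floor(c 2^e / r), and
   2^p <= z < 2^e - 2^p.  Hence the target lies at distance at least 2^p from
   both ends of the cycle of length 2^t_k: a cyclic distance below 2^p is a
   plain distance below 2^p, and such a perturbation cannot reach the two
   leading bits. *)

Lemma leq_totient n : (totient n <= n)%N.
Proof.
rewrite totient_count_coprime.
apply: (@leq_trans (\sum_(0 <= d < n) 1)); first by apply: leq_sum => i _; apply: leq_b1.
by rewrite sum_nat_const_nat muln1 subn0.
Qed.

Lemma is_order_leq a N r : (0 < N)%N -> coprime a N -> is_order a N r -> (r <= N)%N.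
Proof.
move=> N_gt0 coprime_aN [_ [_ r_min]].
apply: leq_trans (leq_totient N).
by apply: r_min; [rewrite totient_gt0 | exact: Euler_exp_totient].
Qed.

Lemma dvdn_ratio_int (R : archiNumFieldType) n d :
  ((d %| n)%N -> (n%:R / d%:R : R) \in Num.int)%R.
Proof.
have [-> | d_gt0] := posnP d; first by rewrite dvd0n => /eqP ->; rewrite mul0r.
by move=> dvd_dn; rewrite -natr_div ?unitfE ?pnatr_eq0 -?lt0n // natr_int.
Qed.

Lemma pred_mul_divn_lt k L : (0 < L)%N -> ((k - 1) * (L %/ k) < L)%N.
Proof.
move=> L_gt0; have [-> | q_gt0] := posnP (L %/ k); first by rewrite muln0.
have := leq_divM L k; nia.
Qed.

Lemma frac_bits_split s r i e : (0 < r)%N ->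
  frac_bits s r i (i.+1 + e) =
  (frac_bits s r i i.+1 * 2 ^ e + (s * 2 ^ i.+1 %% r) * 2 ^ e %/ r)%N.
Proof.
move=> r_gt0; rewrite /frac_bits.
have -> : ((i.+1 + e).+1 - i = 2 + e)%N by lia.
have -> : (i.+2 - i = 2)%N by lia.
set A := (s * 2 ^ i.+1)%N; set z := (A %% r * 2 ^ e %/ r)%N.
have z_lt : (z < 2 ^ e)%N by rewrite ltn_divLR // mulnC ltn_pmul2l ?expn_gt0 ?ltn_mod.
rewrite expnD mulnA -/A {1}(divn_eq A r) mulnDl -mulnA (mulnC r) mulnA divnMDl //.
rewrite {1}(divn_eq (A %/ r) (2 ^ 2)) mulnDl -mulnA -addnA -/z expnD modnMDl modn_small //.
have : (A %/ r %% 2 ^ 2 < 2 ^ 2)%N by rewrite ltn_mod.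
nia.
Qed.

Lemma leq_divn_mul_residue c r E P :
  (0 < c)%N -> (0 < r)%N -> (P * r <= E)%N -> (P <= c * E %/ r)%N.
Proof. by move=> c_gt0 r_gt0 PrE; rewrite leq_divRL //; nia. Qed.

Lemma divn_mul_residue_lt c r E P :
  (c < r)%N -> (P * r < E)%N -> (c * E %/ r + P < E)%N.
Proof.
move=> c_lt_r PrE.
have cE_le : (c.+1 * E <= r * E)%N by rewrite leq_mul2r c_lt_r orbT.
by rewrite addnC -ltn_subRL ltn_divLR ?mulnBl; [nia | lia].
Qed.

Lemma dist_t_lt_abs t x y P : (x < 2 ^ t)%N -> (P <= y)%N -> (y + P <= 2 ^ t)%N ->
  (dist_t t x y < P%:Z)%R -> (`|x%:Z - y%:Z| < P%:Z)%R.
Proof. by move=> x_lt P_le_y y_le; rewrite /dist_t gt_min => /orP[] //; lia. Qed.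

Lemma divn_near x q E z P : (P <= z)%N -> (z + P <= E)%N ->
  (`|x%:Z - (q * E + z)%:Z| < P%:Z)%R -> (x %/ E = q)%N.
Proof.
move=> P_le_z z_le_E near_x.
have E_gt0 : (0 < E)%N by lia.
have -> : x = (q * E + (x - q * E))%N by lia.
by rewrite divnMDl // divn_small ?addn0 //; lia.
Qed.

Lemma dist_t_window e m Q z P :
  (Q < 4)%N -> (P <= z)%N -> (z + P < 2 ^ e)%N -> (m < 2 ^ e.+2)%N ->
  (dist_t e.+2 m (Q * 2 ^ e + z) < P%:Z)%R ->
  top2 e.+2 m = Q /\ (`|m%:Z - (Q * 2 ^ e + z)%N%:Z| < P%:Z)%R.
Proof.
move=> Q_lt z_ge z_lt m_lt dist_m.
have y_le : (Q * 2 ^ e + z + P <= 2 ^ e.+2)%N.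
  have : (Q * 2 ^ e <= 3 * 2 ^ e)%N by rewrite leq_mul2r -ltnS Q_lt orbT.
  by rewrite !expnS; lia.
have near_m := dist_t_lt_abs m_lt (leq_trans z_ge (leq_addl _ _)) y_le dist_m.
split=> //; rewrite /top2 subn2 /=.
exact: divn_near z_ge (ltnW z_lt) near_m.
Qed.

Theorem lemma3 (R : realType) (L k N a r : nat) (eps : R) (p s0 m : nat) :
  (1 <= L)%N -> (1 <= k)%N -> (k %| L)%N ->
  (2 ^ L.-1 <= N < 2 ^ L)%N ->
  (0 < a)%N -> (a < N)%N -> coprime a N ->
  is_order a N r ->
  (0 < eps)%R ->
  (p%:Z = Num.ceil (ln (2 + k%:R / (2 * eps)) / ln 2))%R ->
  let lk := ((k - 1) * (L %/ k)).+1 in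
  let tk := (2 * L + 2 - lk + p)%N in
  (s0 < r)%N ->
  ((2 ^+ lk.+1 * s0%:R / r%:R : R) \notin Num.int)%R ->
  (m < 2 ^ tk)%N ->
  (dist_t tk m (frac_bits s0 r lk (2 * L + 1 + p)) < (2 ^ p)%:Z)%R ->
  top2 tk m = frac_bits s0 r lk lk.+1 /\
  (`|(m%:Z - (frac_bits s0 r lk (2 * L + 1 + p))%:Z)| < (2 ^ p)%:Z)%R.
Proof.
move=> L_gt0 _ _ /andP[N_ge N_lt] _ _ coprime_aN order_r _ _ lk tk s0_lt not_int m_lt dist_m.
have r_lt : (r < 2 ^ L)%N.
  by apply: leq_ltn_trans N_lt; apply: is_order_leq coprime_aN order_r; lia.
have lk_le : (lk <= L)%N by exact: pred_mul_divn_lt L_gt0.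
set e := (2 * L + p - lk)%N.
have pr_lt : (2 ^ p * r < 2 ^ e)%N.
  apply: (@leq_trans (2 ^ p * 2 ^ L)); first by rewrite ltn_pmul2l ?expn_gt0.
  by rewrite -expnD leq_pexp2l //; lia.
have tk_eq : tk = e.+2 by rewrite /tk /e; lia.
have end_eq : (2 * L + 1 + p = lk.+1 + e)%N by rewrite /e; lia.
rewrite tk_eq end_eq in m_lt dist_m *; clearbody e lk.
rewrite frac_bits_split in dist_m *; last by lia.
set c := (s0 * 2 ^ lk.+1 %% r)%N in dist_m *.
have c_gt0 : (0 < c)%N.
  rewrite lt0n; apply: contra not_int => r_dvd.
  by rewrite -natrX -natrM [(2 ^ _ * s0)%N]mulnC; exact: dvdn_ratio_int.
have c_lt : (c < r)%N by rewrite ltn_mod; lia.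
apply: dist_t_window => //.
- by rewrite /frac_bits (_ : lk.+2 - lk = 2)%N ?ltn_mod //; lia.
- by apply: leq_divn_mul_residue; lia.
- exact: divn_mul_residue_lt.
Qed.
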